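(* Let $\mathbf{Q}=(Q,Z,\cdot)$ be a finite automaton, $q\in Q$, $u\in Z^*$, and $\mathcal{C}$ a Conway category. If the identity $\Gamma(\mathbf{Q},q)$ holds in $\mathcal{C}$, then so does $\Gamma(\mathbf{Q},qu)$. Consequently, if $(\mathbf{Q},q)$ is initially connected, then $\Gamma(\mathbf{Q})$ holds in $\mathcal{C}$ if and only if $\Gamma(\mathbf{Q},q)$ holds in $\mathcal{C}$.
   Context: Cartesian categories have chosen finite products (terminal object $T$, projections $\pi_i$, tupling $\langle\cdot\rangle$, $!_A:A\to T$, $f\times g$), strictly associative; composition is written $g\circ f$; $\Delta_{A^n}=\langle 1_A,\ldots,1_A\rangle:A\to A^n$. A dagger operation maps $f:A\times C\to A$ to $f^\dagger:C\to A$. A Conway category is a cartesian category with dagger satisfying: $(f\circ(1_A\times g))^\dagger=f^\dagger\circ g$ ($f:A\times B\to A$, $g:C\to B$); $f^{\dagger\dagger}=(f\circ(\Delta_{A^2}\times 1_C))^\dagger$ ($f:A\times A\times C\to A$); $(f\circ\langle g,\pi_2^{A\times C}\rangle)^\dagger=f\circ\langle (g\circ\langle f,\pi_2^{B\times C}\rangle)^\dagger,1_C\rangle$ ($f:B\times C\to A$, $g:A\times C\to B$). A finite automaton $\mathbf{Q}=(Q,Z,\cdot)$ has finite nonempty state set $Q$, finite nonempty input alphabet $Z$ and action $Q\times Z\to Q$, extended to words $u\in Z^*$, written $qu$. Write $Q=\{q_1,\ldots,q_n\}$, identified with $\{1,\ldots,n\}$, and $Z=\{a_1,\ldots,a_m\}$.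 For an object $A$ and $i\in[n]$ let $\rho_i^{\mathbf{Q},A}=\langle\pi^{A^n}_{ia_1},\ldots,\pi^{A^n}_{ia_m}\rangle:A^n\to A^m$ ($ia_j$ is the index of $q_i\cdot a_j$). For $f:A^m\times C\to A$ let $f^{\mathbf{Q},A}:A^n\times C\to A^n$ have components $\pi_i^{A^n}\circ f^{\mathbf{Q},A}=f\circ(\rho_i^{\mathbf{Q},A}\times 1_C)$. The identity $\Gamma(\mathbf{Q})$ holds in $\mathcal{C}$ if $(f^{\mathbf{Q},A})^\dagger=\Delta_{A^n}\circ(f\circ(\Delta_{A^m}\times 1_C))^\dagger$ for all objects $A,C$ and all $f:A^m\times C\to A$; for a state $q_i$, $\Gamma(\mathbf{Q},q_i)$ holds if $\pi_i^{A^n}\circ(f^{\mathbf{Q},A})^\dagger=(f\circ(\Delta_{A^m}\times 1_C))^\dagger$ for all such $A,C,f$. $(\mathbf{Q},q)$ is initially connected if every state of $\mathbf{Q}$ equals $qu$ for some word $u\in Z^*$. *)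

From mathcomp Require Import all_boot.
Set Implicit Arguments. Unset Strict Implicit. Unset Printing Implicit Defensive.

Record CartCat : Type := MkCartCat {
  Ob :> Type;
  Hom : Ob -> Ob -> Type;
  comp : forall A B D : Ob, Hom B D -> Hom A B -> Hom A D;
  idm : forall A : Ob, Hom A A;
  comp_assoc : forall (A B D E : Ob) (h : Hom D E) (g : Hom B D) (f : Hom A B),
      comp h (comp g f) = comp (comp h g) f;
  comp_idl : forall (A B : Ob) (f : Hom A B), comp (idm B) f = f;
  comp_idr : forall (A B : Ob) (f : Hom A B), comp f (idm A) = f;
  term : Ob;
  bang : forall A : Ob, Hom A term;
  bang_uniq : forall (A : Ob) (f : Hom A term), f = bang A;
  prod : Ob -> Ob -> Ob;
  pi1 : forall A B : Ob, Hom (prod A B) A;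
  pi2 : forall A B : Ob, Hom (prod A B) B;
  pair : forall X A B : Ob, Hom X A -> Hom X B -> Hom X (prod A B);
  pi1_pair : forall (X A B : Ob) (f : Hom X A) (g : Hom X B),
      comp (pi1 A B) (pair f g) = f;
  pi2_pair : forall (X A B : Ob) (f : Hom X A) (g : Hom X B),
      comp (pi2 A B) (pair f g) = g;
  pair_uniq : forall (X A B : Ob) (h : Hom X (prod A B)),
      pair (comp (pi1 A B) h) (comp (pi2 A B) h) = h
}.

Arguments Hom {c} _ _.
Arguments comp {c A B D} _ _.
Arguments idm {c} A.
Arguments term {c}.
Arguments bang {c} A.
Arguments prod {c} _ _.
Arguments pi1 {c} A B.
Arguments pi2 {c} A B.
Arguments pair {c X A B} _ _.

Section CartOps.
Variable K : CartCat.

Definition pmap (A B A' B' : K) (f : Hom A A') (g : Hom B B') :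
  Hom (prod A B) (prod A' B') :=
  pair (comp f (pi1 A B)) (comp g (pi2 A B)).

(* A^(k+1) = A x A^k,  A^1 = A *)
Fixpoint powS (A : K) (k : nat) : K :=
  match k with
  | 0 => A
  | k'.+1 => prod A (powS A k')
  end.

(* i-th projection A^(k+1) -> A (0-based; indices >= k+1 are never used) *)
Fixpoint projS (A : K) (k : nat) (i : nat) : Hom (powS A k) A :=
  match k as k0 return Hom (powS A k0) A with
  | 0 => idm A
  | k'.+1 =>
      match i with
      | 0 => pi1 A (powS A k')
      | i'.+1 => comp (projS A k' i') (pi2 A (powS A k'))
      end
  end.

Fixpoint tupS (X A : K) (k : nat) (fs : nat -> Hom X A) : Hom X (powS A k) :=
  match k as k0 return Hom X (powS A k0) with
  | 0 => fs 0
  | k'.+1 => pair (fs 0) (tupS k' (fun i => fs i.+1))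
  end.

Definition projI (A : K) (k : nat) (i : 'I_k.+1) : Hom (powS A k) A :=
  projS A k i.
Definition tupI (X A : K) (k : nat) (fs : 'I_k.+1 -> Hom X A) : Hom X (powS A k) :=
  tupS k (fun j => fs (inord j)).

Definition diagS (A : K) (k : nat) : Hom A (powS A k) :=
  tupI (fun _ : 'I_k.+1 => idm A).
End CartOps.

Arguments pmap {K A B A' B'} _ _.
Arguments powS {K} A k.
Arguments projS {K} A k i.
Arguments tupS {K X A} k fs.
Arguments projI {K} A {k} i.
Arguments tupI {K X A k} fs.
Arguments diagS {K} A k.

Record ConwayCat : Type := MkConwayCat {
  ccat :> CartCat;
  dagger : forall A C : ccat, Hom (prod A C) A -> Hom C A;
  conway_param : forall (A B C : ccat) (f : Hom (prod A B) A) (g : Hom C B),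
      dagger (comp f (pmap (idm A) g)) = comp (dagger f) g;
  (* double dagger identity, f : A x A x C -> A (right-nested product);
     Delta_{A^2} x 1_C : A x C -> A x A x C is <pi1, <pi1, pi2>> *)
  conway_dbl : forall (A C : ccat) (f : Hom (prod A (prod A C)) A),
      dagger (dagger f) =
      dagger (comp f (pair (pi1 A C) (pair (pi1 A C) (pi2 A C))));
  conway_comp : forall (A B C : ccat) (f : Hom (prod B C) A) (g : Hom (prod A C) B),
      dagger (comp f (pair g (pi2 A C))) =
      comp f (pair (dagger (comp g (pair f (pi2 B C)))) (idm C))
}.

Arguments dagger {c A C} _.

(* Finite automata: Q = 'I_(n'+1) (n = n'+1 states),                     *)
(* Z = 'I_(m'+1) (m = m'+1 letters), action delta.                       *)
Definition run (n' m' : nat) (delta : 'I_n'.+1 -> 'I_m'.+1 -> 'I_n'.+1)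
  (q : 'I_n'.+1) (u : seq 'I_m'.+1) : 'I_n'.+1 := foldl delta q u.

Definition initially_connected (n' m' : nat)
  (delta : 'I_n'.+1 -> 'I_m'.+1 -> 'I_n'.+1) (q : 'I_n'.+1) : Prop :=
  forall p : 'I_n'.+1, exists u : seq 'I_m'.+1, run delta q u = p.

Section Gamma.
Variable K : ConwayCat.
Variables (n' m' : nat) (delta : 'I_n'.+1 -> 'I_m'.+1 -> 'I_n'.+1).

Definition rhoQ (A : K) (i : 'I_n'.+1) : Hom (powS A n') (powS A m') :=
  tupI (fun j : 'I_m'.+1 => projI A (delta i j)).

Definition fQ (A C : K) (f : Hom (prod (powS A m') C) A) :
  Hom (prod (powS A n') C) (powS A n') :=
  tupI (fun i : 'I_n'.+1 => comp f (pmap (rhoQ A i) (idm C))).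

Definition GammaQ : Prop :=
  forall (A C : K) (f : Hom (prod (powS A m') C) A),
    dagger (fQ f) = comp (diagS A n') (dagger (comp f (pmap (diagS A m') (idm C)))).

Definition GammaQat (i : 'I_n'.+1) : Prop :=
  forall (A C : K) (f : Hom (prod (powS A m') C) A),
    comp (projI A i) (dagger (fQ f)) = dagger (comp f (pmap (diagS A m') (idm C))).
End Gamma.

Arguments GammaQ K {n' m'} delta.
Arguments GammaQat K {n' m'} delta i.

From mathcomp Require Import all_boot.
Set Implicit Arguments. Unset Strict Implicit. Unset Printing Implicit Defensive.

(* Γ(Q,q) propagates along a transition q -> q·a.  Apply Γ(Q,q) on the object
   A × A to the function f' whose first component is f and whose second
   component reads off letter a.  The composition identity splits the dagger
   of f'^{Q,A×A} into (f^{Q,A})† paired with its a-successor components, and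
   the dagger of f' o (Δ × 1) into (f o (Δ × 1))† paired with itself; comparing
   second components at state q gives Γ(Q,q·a).  Iterating along a word gives
   the first claim, and when every state is reachable from q, Γ(Q,q) yields
   every component of Γ(Q). *)

Section CartesianPowers.
Variable K : CartCat.

Lemma pair_ext (X A B : K) (h1 h2 : Hom X (prod A B)) :
  comp (pi1 A B) h1 = comp (pi1 A B) h2 ->
  comp (pi2 A B) h1 = comp (pi2 A B) h2 -> h1 = h2.
Proof. by move=> e1 e2; rewrite -(pair_uniq h1) -(pair_uniq h2) e1 e2. Qed.

Lemma pi1_pair_comp (X Y A B : K) (h : Hom A Y) (f : Hom X A) (g : Hom X B) :
  comp (comp h (pi1 A B)) (pair f g) = comp h f.
Proof. by rewrite -comp_assoc pi1_pair. Qed.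

Lemma pi2_pair_comp (X Y A B : K) (h : Hom B Y) (f : Hom X A) (g : Hom X B) :
  comp (comp h (pi2 A B)) (pair f g) = comp h g.
Proof. by rewrite -comp_assoc pi2_pair. Qed.

Lemma projS_tupS (X A : K) k (fs : nat -> Hom X A) i :
  i <= k -> comp (projS A k i) (tupS k fs) = fs i.
Proof.
elim: k fs i => [|k IH] fs [|i] //= le_ik.
- by rewrite comp_idl.
- by rewrite pi1_pair.
- by rewrite -comp_assoc pi2_pair IH.
Qed.

Lemma projI_tupI (X A : K) k (fs : 'I_k.+1 -> Hom X A) (i : 'I_k.+1) :
  comp (projI A i) (tupI fs) = fs i.
Proof. by rewrite /projI /tupI projS_tupS ?inord_val // -ltnS. Qed.

Lemma pow_ext (X A : K) k (h1 h2 : Hom X (powS A k)) :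
  (forall i : 'I_k.+1, comp (projI A i) h1 = comp (projI A i) h2) -> h1 = h2.
Proof.
elim: k h1 h2 => [|k IH] h1 h2 eq_proj.
  by have := eq_proj ord0; rewrite /projI /= !comp_idl.
apply: pair_ext; first exact: (eq_proj ord0).
apply: IH => i; rewrite /projI !comp_assoc.
exact: (eq_proj (lift ord0 i)).
Qed.

Lemma projI_diagS (A : K) k (i : 'I_k.+1) : comp (projI A i) (diagS A k) = idm A.
Proof. exact: projI_tupI. Qed.

Definition pow_fst (A : K) k : Hom (powS (prod A A) k) (powS A k) :=
  tupS k (fun l => comp (pi1 A A) (projS (prod A A) k l)).

Lemma projI_pow_fst (A : K) k (l : 'I_k.+1) :
  comp (projI A l) (pow_fst A k) = comp (pi1 A A) (projI (prod A A) l).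
Proof. by rewrite /projI /pow_fst projS_tupS // -ltnS. Qed.

Lemma pow_fst_diagS (A : K) k :
  comp (pow_fst A k) (diagS (prod A A) k) = comp (diagS A k) (pi1 A A).
Proof.
apply: pow_ext => l.
by rewrite comp_assoc projI_pow_fst -comp_assoc projI_diagS comp_idr
           comp_assoc projI_diagS comp_idl.
Qed.

End CartesianPowers.

Ltac cart_simpl := repeat progress rewrite ?comp_assoc ?pi1_pair ?pi2_pair
  ?pi1_pair_comp ?pi2_pair_comp ?comp_idl ?comp_idr.

Lemma dagger_factor (K : ConwayCat) (A B C : K) (h : Hom (prod A C) A)
    (F : Hom (prod B C) A) (G : Hom (prod A C) B) (k : Hom (prod B C) B) :
  h = comp F (pair G (pi2 A C)) -> comp G (pair F (pi2 B C)) = k ->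
  dagger h = comp F (pair (dagger k) (idm C)).
Proof. by move=> -> <-; exact: conway_comp. Qed.

Section Transition.
Variable K : ConwayCat.
Variables (n' m' : nat) (delta : 'I_n'.+1 -> 'I_m'.+1 -> 'I_n'.+1).

Lemma rhoQ_pow_fst (A : K) (i : 'I_n'.+1) :
  comp (pow_fst A m') (rhoQ delta (prod A A) i) = comp (rhoQ delta A i) (pow_fst A n').
Proof.
apply: pow_ext => l.
by rewrite comp_assoc projI_pow_fst -comp_assoc projI_tupI
           comp_assoc projI_tupI projI_pow_fst.
Qed.

Variables (A C : K) (f : Hom (prod (powS A m') C) A) (j : 'I_m'.+1).

Definition track_letter : Hom (prod (powS (prod A A) m') C) (prod A A) :=
  pair (comp f (pmap (pow_fst A m') (idm C)))
       (comp (projI A j) (comp (pow_fst A m') (pi1 _ C))).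

Lemma snd_dagger_fQ_track (i : 'I_n'.+1) :
  comp (pi2 A A) (comp (projI (prod A A) i) (dagger (fQ delta track_letter))) =
  comp (projI A (delta i j)) (dagger (fQ delta f)).
Proof.
pose F := tupI (fun i : 'I_n'.+1 =>
  pair (comp f (pmap (rhoQ delta A i) (idm C)))
       (comp (projI A (delta i j)) (pi1 (powS A n') C))).
pose G := comp (pow_fst A n') (pi1 _ C).
have -> : dagger (fQ delta track_letter) = comp F (pair (dagger (fQ delta f)) (idm C)).
  apply: (dagger_factor (G := G)).
    apply: pow_ext => i'.
    rewrite /fQ projI_tupI comp_assoc projI_tupI.
    apply: pair_ext; rewrite /track_letter /G /pmap; cart_simpl.
      rewrite -!comp_assoc; congr (comp f _).
      by apply: pair_ext; cart_simpl; rewrite ?rhoQ_pow_fst.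
    by rewrite -(comp_assoc (projI A j)) rhoQ_pow_fst comp_assoc projI_tupI.
  rewrite /G -comp_assoc pi1_pair.
  apply: pow_ext => i'.
  by rewrite comp_assoc projI_pow_fst -comp_assoc !projI_tupI pi1_pair.
by rewrite (comp_assoc (projI _ i)) projI_tupI; cart_simpl.
Qed.

Lemma snd_dagger_track_diag :
  comp (pi2 A A) (dagger (comp track_letter (pmap (diagS (prod A A) m') (idm C)))) =
  dagger (comp f (pmap (diagS A m') (idm C))).
Proof.
pose F := pair (comp f (pmap (diagS A m') (idm C))) (pi1 A C).
pose G := comp (pi1 A A) (pi1 (prod A A) C).
rewrite (dagger_factor (F := F) (G := G) (k := comp f (pmap (diagS A m') (idm C)))).
- by rewrite /F; cart_simpl.
- apply: pair_ext; rewrite /track_letter /F /G /pmap; cart_simpl.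
    rewrite -!comp_assoc; congr (comp f _).
    by apply: pair_ext; cart_simpl; rewrite ?pow_fst_diagS.
  by rewrite -(comp_assoc (projI A j)) pow_fst_diagS comp_assoc projI_diagS comp_idl.
- by rewrite /G -comp_assoc pi1_pair /F pi1_pair.
Qed.

End Transition.

Lemma GammaQat_transition (K : ConwayCat) n' m' (delta : 'I_n'.+1 -> 'I_m'.+1 -> 'I_n'.+1)
    (q : 'I_n'.+1) (j : 'I_m'.+1) :
  GammaQat K delta q -> GammaQat K delta (delta q j).
Proof.
move=> Gq A C f.
by rewrite -snd_dagger_fQ_track Gq snd_dagger_track_diag.
Qed.

Lemma GammaQat_run (K : ConwayCat) n' m' (delta : 'I_n'.+1 -> 'I_m'.+1 -> 'I_n'.+1)
    (q : 'I_n'.+1) (u : seq 'I_m'.+1) :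
  GammaQat K delta q -> GammaQat K delta (run delta q u).
Proof.
rewrite /run; elim: u q => [|a u IH] q //= Gq.
exact/IH/GammaQat_transition.
Qed.

Lemma GammaQ_GammaQat (K : ConwayCat) n' m' (delta : 'I_n'.+1 -> 'I_m'.+1 -> 'I_n'.+1)
    (q : 'I_n'.+1) :
  GammaQ K delta -> GammaQat K delta q.
Proof. by move=> G A C f; rewrite G comp_assoc projI_diagS comp_idl. Qed.

Lemma GammaQ_of_GammaQat (K : ConwayCat) n' m' (delta : 'I_n'.+1 -> 'I_m'.+1 -> 'I_n'.+1) :
  (forall p : 'I_n'.+1, GammaQat K delta p) -> GammaQ K delta.
Proof.
move=> Gp A C f; apply: pow_ext => p.
by rewrite Gp comp_assoc projI_diagS comp_idl.
Qed.

Theorem corollary4p4 (K : ConwayCat) (n' m' : nat)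
  (delta : 'I_n'.+1 -> 'I_m'.+1 -> 'I_n'.+1) (q : 'I_n'.+1) (u : seq 'I_m'.+1) :
  (GammaQat K delta q -> GammaQat K delta (run delta q u)) /\
  (initially_connected delta q -> (GammaQ K delta <-> GammaQat K delta q)).
Proof.
split; first exact: GammaQat_run.
move=> connected; split; first exact: GammaQ_GammaQat.
move=> Gq; apply: GammaQ_of_GammaQat => p.
have [w <-] := connected p.
exact: GammaQat_run.
Qed.
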